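(* Let $\Gamma$ be the rank four incidence system defined in the context from the cube. Then $\Gamma$ is an incidence geometric representation for the group $\mathrm{Sym}(4)\times C_2$.
   Context: An incidence system is a quadruple $\Gamma=(X,*,t,I)$ where $X$ is a set of elements, $I$ a finite set of types, $t:X\to I$ a surjective type function, and $*$ a symmetric binary relation on $X$ (incidence) such that no two elements of the same type are incident. A correlation of $\Gamma$ is a permutation $\alpha$ of $X$ such that for all $x,y\in X$: $t(x)=t(y)\iff t(\alpha(x))=t(\alpha(y))$, and $x*y\iff \alpha(x)*\alpha(y)$. The correlations form a group $\mathrm{Aut}(\Gamma)$; its normal subgroup of type-preserving correlations is $\mathrm{Aut}_I(\Gamma)$. An incidence geometric representation for a group $G$ is an incidence system $\Gamma$ together with isomorphisms $\varphi_1:\mathrm{Inn}(G)\to\mathrm{Aut}_I(\Gamma)$ and $\varphi_2:\mathrm{Aut}(G)\to\mathrm{Aut}(\Gamma)$ with $\varphi_2|_{\mathrm{Inn}(G)}=\varphi_1$. Construction: consider the 3-dimensional cube with its 8 vertices, 12 edges and 6 square faces. The graph formed by its vertices and edges is bipartite; let $\{P_1,P_2\}$ be its proper 2-coloring (the vertex sets of the two tetrahedra inscribed in the cube). The elements of $\Gamma$ of type $1$ are the vertices in $P_1$, of type $2$ the vertices in $P_2$, of type $3$ the edges of the cube, and of type $4$ the faces of the cube. Incidence is induced from the cube: a vertex and an edge/face are incident iff the vertex lies on it, an edge and a face are incident iff the edge lies on the face; two vertices are never incident. *)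

From HB Require Import structures.
From mathcomp Require Import all_boot all_order all_fingroup all_solvable all_algebra.
Set Implicit Arguments. Unset Strict Implicit. Unset Printing Implicit Defensive.

Local Open Scope group_scope.

Record incsys := IncSys {
  elt : finType;
  typ : finType;
  tfun : elt -> typ;
  inc : rel elt
}.

Definition is_incidence_system (S : incsys) : Prop :=
  [/\ forall i : typ S, exists x : elt S, tfun x = i,
      forall x y : elt S, inc x y = inc y x &
      forall x y : elt S, tfun x = tfun y -> ~~ inc x y].

Definition correlations (S : incsys) : {set {perm elt S}} :=
  [set a : {perm elt S} |
     [forall x, forall y, (tfun x == tfun y) == (tfun (a x) == tfun (a y))] &&
     [forall x, forall y, inc x y == inc (a x) (a y)]].

Definition type_pres_correlations (S : incsys) : {set {perm elt S}} :=
  [set a in correlations S | [forall x, tfun (a x) == tfun x]].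

Definition Inn (gT : finGroupType) (G : {group gT}) : {set {perm gT}} :=
  conj_aut G @* G.

Definition incidence_geometric_representation (S : incsys)
    (gT : finGroupType) (G : {group gT}) : Prop :=
  is_incidence_system S /\
  exists phi2 : {morphism Aut G >-> {perm elt S}},
    isom (Aut G) (correlations S) phi2 /\
    phi2 @* Inn G = type_pres_correlations S.

Definition cvert := {ffun 'I_3 -> bool}.

Definition cadj (u v : cvert) : bool := #|[set i : 'I_3 | u i != v i]| == 1%N.

Definition cube_vertices : {set {set cvert}} := [set [set v] | v : cvert].
Definition cube_edges : {set {set cvert}} :=
  [set e : {set cvert} | [exists u : cvert, exists v : cvert, cadj u v && (e == [set u; v])]].
Definition cube_faces : {set {set cvert}} :=
  [set [set v : cvert | v i == b] | i : 'I_3, b : bool].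

Definition cube_elts : {set {set cvert}} := cube_vertices :|: cube_edges :|: cube_faces.

(* The elements of Gamma: vertices, edges and faces, each represented by its
   vertex set. *)
Definition cubeX := {x : {set cvert} | x \in cube_elts}.

(* Color class P1 of the bipartite cube graph: vertices of even weight. *)
Definition P1 : {set cvert} := [set v : cvert | ~~ odd #|[set i : 'I_3 | v i]|].

(* Types 1,2,3,4 are encoded as 0,1,2,3 : 'I_4. *)
Definition cube_type (x : cubeX) : 'I_4 :=
  if val x \in cube_vertices then (if val x \subset P1 then inord 0 else inord 1)
  else if val x \in cube_edges then inord 2 else inord 3.

Definition cube_inc (x y : cubeX) : bool := (val x \proper val y) || (val y \proper val x).

Definition Gamma_cube : incsys := @IncSys cubeX 'I_4 cube_type cube_inc.

Definition S4xC2 : {group ({perm 'I_4} * 'Z_2)} := [set: {perm 'I_4} * 'Z_2]%G.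

From HB Require Import structures.
From mathcomp Require Import all_boot all_order all_fingroup all_solvable all_algebra.
Set Implicit Arguments. Unset Strict Implicit. Unset Printing Implicit Defensive.

(* Write a vertex of the cube as the pair (d, e) of the long diagonal d through it and the
   tetrahedron e containing it.  Then (s, c) in S4 x C2 acts on the cube by
   (d, e) |-> (s d, e + c), which is the full symmetry group of the cube; it therefore acts
   faithfully on Gamma by correlations, and (s, c) preserves types iff c = 0.  A correlation
   fixing a flag (vertex, edge, face) fixes everything, because each element is in turn pinned
   down by its degree and its incidences with elements already known to be fixed; as there
   are only 48 flags, this action chi is onto the correlation group.
   On the group side, an automorphism of G = S4 x C2 is determined by the images of two
   generators, and only 48 pairs of elements satisfy their order relations, so
   |Aut G| <= 48.  With the outer automorphism tau (s, c) = (s, c + sgn s), the map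
   psi g = conj g * tau^c is an injective homomorphism G -> Aut G, hence an isomorphism,
   and it maps S4 x 0 onto Inn G.  Then phi2 = chi o psi^-1.
   The finite checks are done by evaluation, on characteristic vectors of vertex sets for
   the cube and on value lists of permutations for the group. *)

Lemma card_set_count (T : finType) (s : seq T) (P : pred T) :
  uniq s -> (forall x, x \in s) -> #|[set x | P x]| = count P s.
Proof.
move=> s_uniq s_full; have s_enum : perm_eq (enum [set x | P x]) (filter P s).
  apply: uniq_perm; [exact: enum_uniq | exact: filter_uniq |].
  by move=> x; rewrite mem_enum mem_filter inE s_full andbT.
by rewrite cardE (perm_size s_enum) size_filter.
Qed.

Lemma count_eq1_eq (T : eqType) (P : pred T) (s : seq T) (a b : T) :
  count P s = 1 -> a \in s -> b \in s -> P a -> P b -> a = b.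
Proof.
rewrite -size_filter => size1 sa sb Pa Pb.
have: a \in filter P s by rewrite mem_filter Pa sa.
have: b \in filter P s by rewrite mem_filter Pb sb.
by case: (filter P s) size1 => [|c [|]] //= _; rewrite !inE => /eqP-> /eqP->.
Qed.

Lemma all_mem_subset (T : eqType) (s t : seq T) : all (mem t) s -> {subset s <= t}.
Proof. by move/allP. Qed.

Lemma mem_pairs (T U : eqType) (s : seq T) (t : seq U) (x : T) (y : U) :
  ((x, y) \in [seq (x, y) | x <- s, y <- t]) = (x \in s) && (y \in t).
Proof.
apply/allpairsP/andP => [[[x' y'] /= [sx ty [-> ->]]] // | [sx ty]].
by exists (x, y).
Qed.

Lemma imset_can_proper (aT rT : finType) (f : aT -> rT) (g : rT -> aT) (A B : {set aT}) :
  cancel f g -> (f @: A \proper f @: B) = (A \proper B).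
Proof.
move=> fK; have gfK (C : {set aT}) : g @: (f @: C) = C.
  rewrite -imset_comp -[RHS]imset_id; apply: eq_imset; exact: fK.
rewrite !properEcard !(card_imset _ (can_inj fK)); congr (_ && _).
by apply/idP/idP => [/(imsetS g) | /(imsetS f)]; rewrite ?gfK.
Qed.

Lemma perm_tperm_conj_id (T : finType) (s : {perm T}) :
  2 < #|T| -> (forall i j, tperm (s i) (s j) = tperm i j) -> s = 1%g.
Proof.
move=> T_gt2 s_tperm; apply/permP => i; rewrite perm1; apply/eqP/negPn/negP => si_i.
have /subsetPn[j _] : ~~ ([set: T] \subset [set i; s i]).
  apply: contraL T_gt2 => /subset_leq_card; rewrite cardsT -leqNgt => /leq_trans; apply.
  by rewrite cards2; case: (_ != _).
rewrite !inE negb_or => /andP[j_i j_si].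
have := congr1 (fun p : {perm T} => p (s i)) (s_tperm i j).
rewrite /= tpermL (tpermD _ j_si); last by rewrite eq_sym.
by move=> /perm_inj/eqP; rewrite (negPf j_i).
Qed.

Definition i0 : 'I_3 := @Ordinal 3 0 isT.
Definition i1 : 'I_3 := @Ordinal 3 1 isT.
Definition i2 : 'I_3 := @Ordinal 3 2 isT.

Lemma card_I3_count (P : pred 'I_3) : #|[set i | P i]| = count P [:: i0; i1; i2].
Proof. by apply: card_set_count => // -[[|[|[|]]] ?]. Qed.

Definition bit3 := (bool * bool * bool)%type.
Definition bits (t : bit3) : seq bool := [:: t.1.1; t.1.2; t.2].
Definition all_bit3 : seq bit3 :=
  [:: (false, false, false); (false, false, true); (false, true, false);
      (false, true, true); (true, false, false); (true, false, true);
      (true, true, false); (true, true, true)].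
Lemma mem_all_bit3 t : t \in all_bit3. Proof. by case: t => [[[] []] []]. Qed.

Definition vertex (t : bit3) : cvert := [ffun i : 'I_3 => nth false (bits t) i].
Definition coords (v : cvert) : bit3 := (v i0, v i1, v i2).

Lemma coordsK : cancel coords vertex.
Proof.
move=> v; apply/ffunP => -[[|[|[|]]] ?] //; rewrite ffunE /=;
  by congr (v _); apply: val_inj.
Qed.
Lemma vertexK : cancel vertex coords.
Proof. by case=> [[a b] c]; rewrite /coords !ffunE. Qed.
Lemma vertex_inj : injective vertex. Proof. exact: can_inj vertexK. Qed.

Lemma card_cvert_count (P : pred cvert) :
  #|[set v | P v]| = count (P \o vertex) all_bit3.
Proof.
rewrite (@card_set_count _ (map vertex all_bit3)) ?count_map //.
  by rewrite (map_inj_uniq vertex_inj).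
by move=> v; rewrite -(coordsK v) map_f ?mem_all_bit3.
Qed.

Definition bitmask (X : {set cvert}) : seq bool := [seq vertex t \in X | t <- all_bit3].

Lemma bitmask_inj : injective bitmask.
Proof.
move=> X Y /eq_in_map eqXY; apply/setP => v; rewrite -(coordsK v).
exact: eqXY (mem_all_bit3 _).
Qed.

Lemma nth_bitmask (X : {set cvert}) t :
  nth false (bitmask X) (index t all_bit3) = (vertex t \in X).
Proof.
by rewrite (nth_map (false, false, false)) ?index_mem ?mem_all_bit3 ?nth_index ?mem_all_bit3.
Qed.

Lemma card_bitmask (X : {set cvert}) : #|X| = count id (bitmask X).
Proof.
have -> : #|X| = #|[set v | v \in X]| by apply: eq_card => v; rewrite inE.
by rewrite card_cvert_count /bitmask count_map.
Qed.

Definition mask_sub (m1 m2 : seq bool) := all (fun p => p.1 ==> p.2) (zip m1 m2).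

Lemma subset_bitmask (X Y : {set cvert}) : (X \subset Y) = mask_sub (bitmask X) (bitmask Y).
Proof.
rewrite /mask_sub /bitmask zip_map all_map; apply/subsetP/allP => [XY t _ | XY v].
  by apply/implyP => /XY.
by rewrite -(coordsK v) => Xv; have /implyP := XY (coords v) (mem_all_bit3 _); apply.
Qed.

Definition vmask (t : bit3) := [seq u == t | u <- all_bit3].
Definition emask (t t' : bit3) := [seq (u == t) || (u == t') | u <- all_bit3].
Definition fmask (i : nat) (b : bool) := [seq nth false (bits u) i == b | u <- all_bit3].

Lemma bitmask_set1 t : bitmask [set vertex t] = vmask t.
Proof. by apply: eq_map => u; rewrite inE (inj_eq vertex_inj). Qed.
Lemma bitmask_set2 t t' : bitmask [set vertex t; vertex t'] = emask t t'.
Proof. by apply: eq_map => u; rewrite !inE !(inj_eq vertex_inj). Qed.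
Lemma bitmask_face (i : 'I_3) b : bitmask [set v : cvert | v i == b] = fmask i b.
Proof. by apply: eq_map => u; rewrite inE ffunE. Qed.

Definition adjb (t u : bit3) :=
  count (fun i => nth false (bits t) i != nth false (bits u) i) [:: 0; 1; 2] == 1.

Lemma cadj_vertex t u : cadj (vertex t) (vertex u) = adjb t u.
Proof. by rewrite /cadj card_I3_count /= !ffunE; case: t u => [[? ?] ?] [[? ?] ?]. Qed.

Definition cube_masks : seq (seq bool) :=
  undup ([seq vmask t | t <- all_bit3] ++
         [seq emask p.1 p.2 | p <- [seq (t, u) | t <- all_bit3, u <- all_bit3] & adjb p.1 p.2] ++
         [seq fmask i b | i <- [:: 0; 1; 2], b <- [:: false; true]]).

Lemma vertex_elt_proof t : [set vertex t] \in cube_elts.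
Proof. by rewrite /cube_elts !in_setU imset_f. Qed.
Definition vertex_elt t : cubeX := Sub [set vertex t] (vertex_elt_proof t).

Lemma adjb_cube_edge t u : adjb t u -> [set vertex t; vertex u] \in cube_edges.
Proof.
move=> tu; rewrite inE; apply/existsP; exists (vertex t); apply/existsP; exists (vertex u).
by rewrite cadj_vertex tu eqxx.
Qed.

Lemma edge_elt_proof t u : adjb t u -> [set vertex t; vertex u] \in cube_elts.
Proof. by move=> tu; rewrite /cube_elts !in_setU adjb_cube_edge ?orbT. Qed.
Definition edge_elt t u (tu : adjb t u) : cubeX := Sub [set vertex t; vertex u] (edge_elt_proof tu).

Lemma face_elt_proof (i : 'I_3) b : [set v : cvert | v i == b] \in cube_elts.
Proof. by rewrite /cube_elts !in_setU; apply/orP; right; apply/imset2P; exists i b. Qed.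
Definition face_elt (i : 'I_3) b : cubeX := Sub [set v : cvert | v i == b] (face_elt_proof i b).

Definition elt_mask (x : cubeX) := bitmask (val x).

Lemma elt_mask_inj : injective elt_mask.
Proof. by move=> x y /bitmask_inj /val_inj. Qed.

Lemma cube_eltsP (X : {set cvert}) : X \in cube_elts ->
  [\/ exists t, X = [set vertex t],
      exists t u, adjb t u /\ X = [set vertex t; vertex u] |
      exists i b, X = [set v : cvert | v i == b]].
Proof.
rewrite /cube_elts !in_setU inE.
case/orP=> [/orP[/imsetP[v _ ->] | /existsP[u /existsP[v /andP[uv /eqP->]]]] |].
- by apply: Or31; exists (coords v); rewrite coordsK.
- by apply: Or32; exists (coords u), (coords v); rewrite -cadj_vertex !coordsK.
- by case/imset2P=> i b _ _ ->; apply: Or33; exists i, b.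
Qed.

Lemma elt_mask_cube x : elt_mask x \in cube_masks.
Proof.
rewrite /elt_mask mem_undup !mem_cat; case/cube_eltsP: (valP x).
- by move=> [t ->]; rewrite bitmask_set1 map_f ?mem_all_bit3.
- move=> [t [u [tu ->]]]; rewrite bitmask_set2; apply/or3P; apply: Or32.
  apply/mapP; exists (t, u) => //; rewrite mem_filter tu.
  by apply/allpairsP; exists (t, u); rewrite !mem_all_bit3.
- by move=> [i [b ->]]; rewrite bitmask_face; case: i => -[|[|[|]]] ? //; case: b.
Qed.

Lemma cube_masksP m : m \in cube_masks -> exists x, elt_mask x = m.
Proof.
rewrite mem_undup !mem_cat => /or3P[/mapP[t _ ->] | /mapP[p] | ].
- by exists (vertex_elt t); rewrite /elt_mask bitmask_set1.
- rewrite mem_filter => /andP[tu _] ->.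
  by exists (edge_elt tu); rewrite /elt_mask bitmask_set2.
- move=> /or4P[] // /mapP[b _ ->];
    [exists (face_elt i0 b) | exists (face_elt i1 b) | exists (face_elt i2 b)];
  by rewrite /elt_mask bitmask_face.
Qed.

Lemma card_cubeX_count (P : pred (seq bool)) :
  #|[set x : cubeX | P (elt_mask x)]| = count P cube_masks.
Proof.
have codes : perm_eq (map elt_mask (enum [set: cubeX])) cube_masks.
  apply: uniq_perm; [by rewrite (map_inj_uniq elt_mask_inj) enum_uniq | exact: undup_uniq |].
  move=> m; apply/mapP/idP => [[x _ ->] | /cube_masksP[x <-]]; first exact: elt_mask_cube.
  by exists x; rewrite ?mem_enum ?inE.
rewrite (card_set_count _ (enum_uniq [set: cubeX])) => [|x]; last by rewrite mem_enum inE.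
by rewrite -(count_map elt_mask) (seq.permP codes).
Qed.

Definition mask_proper m1 m2 := mask_sub m1 m2 && ~~ mask_sub m2 m1.
Definition mask_inc m1 m2 := mask_proper m1 m2 || mask_proper m2 m1.

Lemma cube_inc_mask (x y : cubeX) : cube_inc x y = mask_inc (elt_mask x) (elt_mask y).
Proof. by rewrite /cube_inc /mask_inc /mask_proper !properE !subset_bitmask. Qed.

Definition degree (x : cubeX) := #|[set y | cube_inc x y]|.
Definition mask_degree m := count (mask_inc m) cube_masks.

Lemma degree_mask (x : cubeX) : degree x = mask_degree (elt_mask x).
Proof.
rewrite /degree /mask_degree -card_cubeX_count.
by apply: eq_card => y; rewrite !inE cube_inc_mask.
Qed.

Lemma cube_vertices_card (X : {set cvert}) : (X \in cube_vertices) = (#|X| == 1).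
Proof. by apply/imsetP/cards1P => -[v]; [move=> _ ->|move->]; exists v. Qed.

Lemma card_edge (X : {set cvert}) : X \in cube_edges -> #|X| = 2.
Proof.
rewrite inE => /existsP[u /existsP[v /andP[uv /eqP->]]]; rewrite cards2.
by case: eqP uv => [<-|//]; rewrite -(coordsK u) cadj_vertex; case: (coords u) => [[[] []] []].
Qed.

Lemma card_face (i : 'I_3) b : #|[set v : cvert | v i == b]| = 4.
Proof. by rewrite card_bitmask bitmask_face; case: i => -[|[|[|]]] ? //; case: b. Qed.

Lemma card_cube_elt (x : cubeX) : #|val x| \in [:: 1; 2; 4].
Proof.
case/cube_eltsP: (valP x) => [[t ->] | [t [u [tu ->]]] | [i [b ->]]].
- by rewrite cards1.
- by rewrite card_edge // adjb_cube_edge.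
- by rewrite card_face.
Qed.

Definition type_of_card (n : nat) (even : bool) : 'I_4 :=
  if n == 1 then (if even then inord 0 else inord 1)
  else if n == 2 then inord 2 else inord 3.

Lemma cube_typeE (x : cubeX) : cube_type x = type_of_card #|val x| (val x \subset P1).
Proof.
rewrite /cube_type /type_of_card cube_vertices_card; case: ifP => // x_not_vertex.
congr (if _ then _ else _); apply/idP/eqP => [/card_edge // | card2].
case/cube_eltsP: (valP x) => [[t vx] | [t [u [tu ->]]] | [i [b vx]]].
- by rewrite vx cards1 in card2.
- exact: adjb_cube_edge.
- by rewrite vx card_face in card2.
Qed.

Lemma card_cube_type (x : cubeX) : #|val x| = nth 0 [:: 1; 1; 2; 4] (cube_type x).
Proof.
rewrite cube_typeE /type_of_card.
have := card_cube_elt x; rewrite !inE => /or3P[] /eqP->; rewrite ?inordK //.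
by case: (_ \subset _); rewrite inordK.
Qed.

Lemma P1_vertex t : (vertex t \in P1) = ~~ odd (count id (bits t)).
Proof. by rewrite inE card_I3_count /= !ffunE; case: t => [[? ?] ?]. Qed.

Lemma adj0 : adjb (false, false, false) (true, false, false). Proof. by []. Qed.
Definition vertex0 : cubeX := vertex_elt (false, false, false).
Definition edge0 : cubeX := edge_elt adj0.
Definition face0 : cubeX := face_elt i2 false.

Lemma cube_incidence_system : is_incidence_system Gamma_cube.
Proof.
split=> [i | x y | x y /= same_type]; last 2 first.
- by rewrite /= /cube_inc orbC.
- apply/negP => /orP[] /proper_card;
  by rewrite !card_cube_type same_type ltnn.
suff [x type_x] : exists x, val (cube_type x) = i by exists x; apply: val_inj.
case: i => -[|[|[|[|]]]] //= _.
- exists vertex0.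
  by rewrite cube_typeE cards1 sub1set P1_vertex /type_of_card /= inordK.
- exists (vertex_elt (true, false, false)).
  by rewrite cube_typeE cards1 sub1set P1_vertex /type_of_card /= inordK.
- by exists edge0; rewrite cube_typeE card_bitmask bitmask_set2 /type_of_card /= inordK.
- by exists face0; rewrite cube_typeE card_face /type_of_card /= inordK.
Qed.

(** * A correlation is determined by the image of a flag *)

Definition same_pattern (K : seq (seq bool)) (m m' : seq bool) :=
  (mask_degree m' == mask_degree m) && all (fun k => mask_inc m' k == mask_inc m k) K.

Definition determined_by (K : seq (seq bool)) (m : seq bool) :=
  count (same_pattern K m) cube_masks == 1.

Fixpoint determined_closure (n : nat) (K : seq (seq bool)) : seq (seq bool) :=
  if n is n'.+1 then determined_closure n' (K ++ [seq m <- cube_masks | determined_by K m])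
  else K.

Section Rigidity.

Variable a : {perm cubeX}.
Hypothesis a_inc : forall x y, cube_inc (a x) (a y) = cube_inc x y.

Lemma degree_perm (x : cubeX) : degree (a x) = degree x.
Proof.
rewrite /degree -[RHS](card_imset _ (@perm_inj _ a)); apply: eq_card => y.
rewrite [LHS]inE; apply/idP/imsetP => [xy | [z xz ->]].
  by exists (a^-1 y)%g; rewrite ?permKV // inE -a_inc permKV.
by rewrite a_inc -(in_set (cube_inc x)).
Qed.

Lemma fixed_determined (K : seq (seq bool)) (m : seq bool) :
  {subset K <= cube_masks} -> (forall x, elt_mask x \in K -> a x = x) ->
  determined_by K m -> forall x, elt_mask x = m -> a x = x.
Proof.
move=> K_cube K_fixed + x mx; rewrite -mx => /eqP m_det; apply: elt_mask_inj.
apply: (count_eq1_eq m_det); rewrite ?elt_mask_cube // /same_pattern.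
  rewrite -!degree_mask degree_perm eqxx andTb.
  apply/allP => k /[dup] /K_cube /cube_masksP[y <-] Ky.
  by rewrite -!cube_inc_mask -{1}(K_fixed y Ky) a_inc.
by rewrite eqxx; apply/allP => k _.
Qed.

Lemma fixed_closure (n : nat) (K : seq (seq bool)) :
  {subset K <= cube_masks} -> (forall x, elt_mask x \in K -> a x = x) ->
  forall x, elt_mask x \in determined_closure n K -> a x = x.
Proof.
elim: n K => [|n IHn] K K_cube K_fixed; first exact: K_fixed.
apply: IHn => [m | x].
  by rewrite mem_cat mem_filter => /orP[/K_cube | /andP[]].
rewrite mem_cat mem_filter => /orP[/K_fixed // | /andP[m_det _]].
exact: fixed_determined m_det x erefl.
Qed.

End Rigidity.

Definition flag_masks : seq (seq bool) :=
  [:: vmask (false, false, false); emask (false, false, false) (true, false, false);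
      fmask 2 false].

Lemma flag_closure_full : {subset cube_masks <= determined_closure 3 flag_masks}.
Proof. by apply: all_mem_subset; vm_compute. Qed.

Lemma flag_masksE : flag_masks = [:: elt_mask vertex0; elt_mask edge0; elt_mask face0].
Proof. by rewrite /elt_mask /= bitmask_set1 bitmask_set2 bitmask_face. Qed.

Lemma perm_fixing_flag (a : {perm cubeX}) :
  (forall x y, cube_inc (a x) (a y) = cube_inc x y) ->
  a vertex0 = vertex0 -> a edge0 = edge0 -> a face0 = face0 -> a = 1%g.
Proof.
move=> a_inc av ae af; apply/permP => x; rewrite perm1.
apply: (fixed_closure a_inc (n := 3) (K := flag_masks)).
- by apply: all_mem_subset; vm_compute.
- by move=> y; rewrite flag_masksE !inE => /or3P[] /eqP /elt_mask_inj->.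
- exact: flag_closure_full (elt_mask_cube x).
Qed.

(* Vertices, edges and faces are the elements of degree 6, 4 and 8. *)
Definition is_mask_flag (f : seq bool * seq bool * seq bool) : bool :=
  let: (m1, m2, m3) := f in
  [&& mask_inc m1 m2, mask_inc m2 m3, mask_inc m1 m3,
      mask_degree m1 == 6, mask_degree m2 == 4 & mask_degree m3 == 8].

Definition mask_flags : seq (seq bool * seq bool * seq bool) :=
  [seq f <- [seq (m12, m3) | m12 <- [seq (m1, m2) | m1 <- cube_masks, m2 <- cube_masks],
                             m3 <- cube_masks] | is_mask_flag f].

Lemma size_mask_flags : size mask_flags = 48. Proof. by vm_compute. Qed.

Lemma mem_mask_flags (x y z : cubeX) :
  ((elt_mask x, elt_mask y, elt_mask z) \in mask_flags) =
  [&& cube_inc x y, cube_inc y z, cube_inc x z,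
      degree x == 6, degree y == 4 & degree z == 8].
Proof.
by rewrite mem_filter !mem_pairs !elt_mask_cube andbT /= !cube_inc_mask !degree_mask andbT.
Qed.

Lemma flag0_mask_flag : (elt_mask vertex0, elt_mask edge0, elt_mask face0) \in mask_flags.
Proof. by rewrite /elt_mask /= bitmask_set1 bitmask_set2 bitmask_face; vm_compute. Qed.

Lemma correlation_inc (a : {perm cubeX}) : a \in correlations Gamma_cube ->
  forall x y, cube_inc (a x) (a y) = cube_inc x y.
Proof. by rewrite inE => /andP[_ /forallP a_inc] x y; have /forallP/(_ y)/eqP := a_inc x. Qed.

Definition flag_image (a : {perm cubeX}) :=
  (elt_mask (a vertex0), elt_mask (a edge0), elt_mask (a face0)).

Lemma flag_image_inj : {in correlations Gamma_cube &, injective flag_image}.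
Proof.
move=> a b /correlation_inc a_inc /correlation_inc b_inc /eqP.
rewrite !xpair_eqE => /andP[/andP[/eqP/elt_mask_inj av /eqP/elt_mask_inj ae]].
move=> /eqP/elt_mask_inj af.
have ab_inc x y : cube_inc ((a * b^-1)%g x) ((a * b^-1)%g y) = cube_inc x y.
  by rewrite !permM -b_inc !permKV a_inc.
have ab1 : (a * b^-1 = 1)%g by apply: perm_fixing_flag; rewrite // permM ?av ?ae ?af permK.
by apply/eqP; rewrite eq_mulgV1 ab1.
Qed.

Lemma flag_image_mem (a : {perm cubeX}) :
  a \in correlations Gamma_cube -> flag_image a \in mask_flags.
Proof.
move=> /correlation_inc a_inc; rewrite mem_mask_flags !a_inc !degree_perm //.
by rewrite -mem_mask_flags flag0_mask_flag.
Qed.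

Lemma card_correlations : #|correlations Gamma_cube| <= 48.
Proof.
rewrite -size_mask_flags cardE -(size_map flag_image); apply: uniq_leq_size.
  rewrite (map_inj_in_uniq (f := flag_image)) ?enum_uniq // => a b.
  by rewrite !mem_enum; apply: flag_image_inj.
by move=> f /mapP[a]; rewrite mem_enum => /flag_image_mem + ->.
Qed.

(** * The action of S4 x C2 on the cube *)

Local Notation S4C2 := ({perm 'I_4} * 'Z_2)%type.

Lemma odd_Z2M (c d : 'Z_2) : odd (c * d)%g = odd c (+) odd d.
Proof. by have -> : (c * d)%g = (c + d) %% 2 :> nat by []; rewrite modn2 oddb oddD. Qed.

Lemma odd_Z2_inj : injective (fun c : 'Z_2 => odd c).
Proof. by move=> [[|[|?]] ?] [[|[|?]] ?] //= _; apply: val_inj. Qed.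

Lemma odd_Z2V (c : 'Z_2) : odd c^-1%g = odd c.
Proof. by case: c => [[|[|?]] ?]. Qed.

(* The long diagonal through a vertex is coded by which of its last two coordinates differ
   from the first one, its tetrahedron by the parity of its coordinates; [vertexb] inverts
   this coding. *)
Definition diagb (t : bit3) : nat := 2 * (t.1.1 != t.1.2) + (t.1.1 != t.2).
Definition parityb (t : bit3) : bool := t.1.1 (+) t.1.2 (+) t.2.
Definition vertexb (i : nat) (e : bool) : bit3 :=
  let a := e (+) (1 < i) (+) odd i in (a, a (+) (1 < i), a (+) odd i).

Definition diag (v : cvert) : 'I_4 := inord (diagb (coords v)).
Definition parity (v : cvert) : bool := parityb (coords v).
Definition diag_vertex (i : 'I_4) (e : bool) : cvert := vertex (vertexb i e).

Lemma diag_vertexK i e : diag (diag_vertex i e) = i.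
Proof.
apply: ord_inj; rewrite /diag /diag_vertex vertexK.
by case: i => -[|[|[|[|]]]] ? //; case: e; rewrite inordK.
Qed.

Lemma parity_diag_vertex i e : parity (diag_vertex i e) = e.
Proof. by rewrite /parity /diag_vertex vertexK; case: i => -[|[|[|[|]]]] ? //; case: e. Qed.

Lemma diag_vertexE v : diag_vertex (diag v) (parity v) = v.
Proof.
rewrite -[RHS]coordsK /diag_vertex /diag /parity; congr vertex.
by case: (coords v) => [[[] []] []]; rewrite /= inordK.
Qed.

Lemma P1_parity v : (v \in P1) = ~~ parity v.
Proof. by rewrite -(coordsK v) P1_vertex /parity vertexK; case: (coords v) => [[[] []] []]. Qed.

Definition cube_act (g : S4C2) (v : cvert) : cvert :=
  diag_vertex (g.1 (diag v)) (parity v (+) odd g.2).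

Lemma cube_act1 v : cube_act 1%g v = v.
Proof. by rewrite /cube_act perm1 addbF diag_vertexE. Qed.

Lemma cube_actM g h v : cube_act (g * h)%g v = cube_act h (cube_act g v).
Proof. by rewrite /cube_act diag_vertexK parity_diag_vertex permM odd_Z2M addbA. Qed.

Lemma cube_actK g : cancel (cube_act g) (cube_act g^-1%g).
Proof. by move=> v; rewrite -cube_actM mulgV cube_act1. Qed.

Lemma cube_act_inj g : injective (cube_act g). Proof. exact: can_inj (@cube_actK g). Qed.

Lemma parity_act g v : parity (cube_act g v) = parity v (+) odd g.2.
Proof. exact: parity_diag_vertex. Qed.

Definition perm_code (s : {perm 'I_4}) : seq nat := [seq val (s i) | i <- enum 'I_4].

Lemma nth_perm_code (s : {perm 'I_4}) (i : 'I_4) : nth 0 (perm_code s) i = s i.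
Proof. by rewrite (nth_map i) ?size_enum_ord // nth_ord_enum. Qed.

Lemma perm_code_inj : injective perm_code.
Proof. by move=> s t st; apply/permP => i; apply: ord_inj; rewrite -!nth_perm_code st. Qed.

Lemma index_perm_code (s : {perm 'I_4}) (i : 'I_4) : index (val (s i)) (perm_code s) = i.
Proof.
by rewrite (index_map (f := fun i => val (s i))) ?index_enum_ord // => j k /val_inj/perm_inj.
Qed.

Lemma perm_code_mem (s : {perm 'I_4}) : perm_code s \in permutations (iota 0 4).
Proof.
rewrite mem_permutations -val_enum_ord /perm_code (map_comp val s); apply: perm_map.
apply: uniq_perm; rewrite ?enum_uniq ?(map_inj_uniq (@perm_inj _ s)) ?enum_uniq // => i.
by rewrite mem_enum inE; apply/mapP; exists (s^-1 i)%g; rewrite ?mem_enum ?permKV.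
Qed.

Definition act_mask (p : seq nat) (c : bool) (m : seq bool) : seq bool :=
  [seq nth false m (index (vertexb (index (diagb t) p) (parityb t (+) c)) all_bit3)
  | t <- all_bit3].

Lemma bitmask_act (g : S4C2) (X : {set cvert}) :
  bitmask (cube_act g @: X) = act_mask (perm_code g.1) (odd g.2) (bitmask X).
Proof.
apply: eq_map => t.
rewrite nth_bitmask -[vertex t](@cube_actK g^-1%g) invgK mem_imset; last exact: cube_act_inj.
rewrite /cube_act /diag_vertex /diag /parity odd_Z2V vertexK; congr (vertex (vertexb _ _) \in X).
have diag_t : diagb t = nat_of_ord (g.1 ((g.1)^-1%g (inord (diagb t)))).
  by rewrite permKV inordK //; case: t => [[[] []] []].
by rewrite [in RHS]diag_t; apply/esym; exact: index_perm_code.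
Qed.

Lemma act_mask_cube_masks :
  all (fun p => all (fun c => all (fun m => act_mask p c m \in cube_masks) cube_masks)
    [:: false; true]) (permutations (iota 0 4)).
Proof. by vm_compute. Qed.

Lemma cube_act_elt (g : S4C2) (x : cubeX) : cube_act g @: val x \in cube_elts.
Proof.
have : bitmask (cube_act g @: val x) \in cube_masks.
  have odd_bool : odd g.2 \in [:: false; true] by case: (odd g.2).
  move/allP/(_ _ (perm_code_mem g.1))/allP/(_ _ odd_bool)/allP: act_mask_cube_masks.
  by rewrite bitmask_act; apply; apply: elt_mask_cube.
by case/cube_masksP=> y /bitmask_inj <-; apply: valP.
Qed.

Definition cube_corr_fun (g : S4C2) (x : cubeX) : cubeX :=
  Sub (cube_act g @: val x) (cube_act_elt g x).

Lemma cube_corr_fun_inj (g : S4C2) : injective (cube_corr_fun g).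
Proof. by move=> x y /(congr1 val) /(imset_inj (@cube_act_inj g)) /val_inj. Qed.

Definition cube_corr (g : S4C2) : {perm cubeX} := perm (@cube_corr_fun_inj g).

Lemma val_cube_corr (g : S4C2) (x : cubeX) : val (cube_corr g x) = cube_act g @: val x.
Proof. by rewrite permE. Qed.

Lemma cube_corrM : {in S4xC2 &, {morph cube_corr : g h / (g * h)%g}}.
Proof.
move=> g h _ _; apply/permP => x; apply: val_inj.
rewrite permM !val_cube_corr -imset_comp; apply: eq_imset => v; exact: cube_actM.
Qed.

Canonical cube_corr_morphism := Morphism cube_corrM.

Lemma cube_act_faithful (g h : S4C2) : cube_act g =1 cube_act h -> g = h.
Proof.
move=> gh; have gh_diag i e :
    diag_vertex (g.1 i) (e (+) odd g.2) = diag_vertex (h.1 i) (e (+) odd h.2).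
  by have := gh (diag_vertex i e); rewrite /cube_act diag_vertexK parity_diag_vertex.
case: g h gh_diag {gh} => [s c] [t d] /= gh_diag; congr pair.
  by apply/permP => i; have /(congr1 diag) := gh_diag i false; rewrite !diag_vertexK.
by apply: odd_Z2_inj; have /(congr1 parity) := gh_diag ord0 false; rewrite !parity_diag_vertex.
Qed.

Lemma cube_corr_inj : {in S4xC2 &, injective cube_corr}.
Proof.
move=> g h _ _ gh; apply: cube_act_faithful => v.
have /(congr1 val) := congr1 (fun a : {perm cubeX} => a (vertex_elt (coords v))) gh.
by rewrite !val_cube_corr /= coordsK !imset_set1 => /set1_inj.
Qed.

Lemma cube_inc_corr (g : S4C2) (x y : cubeX) :
  cube_inc (cube_corr g x) (cube_corr g y) = cube_inc x y.
Proof. by rewrite /cube_inc !val_cube_corr !(imset_can_proper _ _ (@cube_actK g)). Qed.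

Definition tetra_swap (b : bool) : {perm 'I_4} := if b then tperm (inord 0) (inord 1) else 1%g.

Lemma type_of_card_swap (n : nat) (b c : bool) :
  tetra_swap c (type_of_card n b) = type_of_card n (b (+) c).
Proof.
rewrite /tetra_swap /type_of_card; case: c; rewrite ?perm1 ?addbF ?addbT //.
have neq (i j : nat) : i < 4 -> j < 4 -> i != j -> inord i != inord j :> 'I_4.
  by move=> ? ? ij; rewrite -val_eqE /= !inordK.
case: (n == 1); first by case: b; rewrite ?tpermL ?tpermR.
by case: (n == 2); rewrite tpermD // neq.
Qed.

Lemma cube_type_corr (g : S4C2) (x : cubeX) :
  cube_type (cube_corr g x) = tetra_swap (odd g.2) (cube_type x).
Proof.
rewrite !cube_typeE val_cube_corr type_of_card_swap (card_imset _ (@cube_act_inj g)).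
have [/eqP/cards1P[v ->] | not_vertex] := eqVneq #|val x| 1; last first.
  by rewrite /type_of_card (negPf not_vertex).
by rewrite imset_set1 !sub1set !P1_parity parity_act addNb.
Qed.

Lemma cube_corr_correlation (g : S4C2) : cube_corr g \in correlations Gamma_cube.
Proof.
rewrite inE; apply/andP; split; apply/forallP => x; apply/forallP => y.
  by rewrite /= !cube_type_corr (inj_eq perm_inj).
by rewrite /= cube_inc_corr.
Qed.

Lemma cube_corr_type_pres (g : S4C2) :
  (cube_corr g \in type_pres_correlations Gamma_cube) = ~~ odd g.2.
Proof.
rewrite inE cube_corr_correlation /=; apply/forallP/idP => [type_pres | even_g x].
  apply/negP => odd_g; have /eqP := type_pres vertex0.
  rewrite cube_type_corr odd_g /tetra_swap.
  have -> : cube_type vertex0 = inord 0.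
    by rewrite cube_typeE cards1 sub1set P1_vertex.
  by rewrite tpermL => /(congr1 (@nat_of_ord 4)); rewrite !inordK.
by rewrite /= cube_type_corr (negPf even_g) perm1.
Qed.

Lemma card_S4xC2 : #|S4xC2| = 48.
Proof. by rewrite cardsT card_prod card_Sn card_ord. Qed.

Lemma im_cube_corr : cube_corr @: S4xC2 = correlations Gamma_cube.
Proof.
apply/eqP; rewrite eqEcard; apply/andP; split.
  by apply/subsetP => a /imsetP[g _ ->]; apply: cube_corr_correlation.
rewrite (card_in_imset cube_corr_inj).
by rewrite card_S4xC2 card_correlations.
Qed.

(** * Automorphisms of S4 x C2 *)

Local Open Scope group_scope.

Lemma enum_ord4 :
  enum 'I_4 = [:: @Ordinal 4 0 isT; @Ordinal 4 1 isT; @Ordinal 4 2 isT; @Ordinal 4 3 isT].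
Proof. by apply: (inj_map val_inj); rewrite val_enum_ord. Qed.

Definition code := (seq nat * bool)%type.
Definition gcode (g : S4C2) : code := (perm_code g.1, odd g.2).
Definition code_mul (a b : code) : code := ([seq nth 0 b.1 k | k <- a.1], a.2 (+) b.2).
Definition code1 : code := (iota 0 4, false).
Definition code_exp (a : code) (n : nat) : code := iter n (code_mul a) code1.

Lemma gcode_inj : injective gcode.
Proof.
move=> [s c] [t d] /eqP; rewrite xpair_eqE /= => /andP[/eqP/perm_code_inj st /eqP/odd_Z2_inj cd].
by rewrite st cd.
Qed.

Lemma perm_codeM (s t : {perm 'I_4}) :
  perm_code (s * t) = [seq nth 0 (perm_code t) k | k <- perm_code s].
Proof. by rewrite /perm_code -map_comp; apply: eq_map => i /=; rewrite permM nth_perm_code. Qed.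

Lemma gcodeM (g h : S4C2) : gcode (g * h) = code_mul (gcode g) (gcode h).
Proof. by rewrite /gcode /code_mul /= perm_codeM odd_Z2M. Qed.

Lemma gcode1 : gcode 1 = code1.
Proof.
by rewrite /gcode /code1 /perm_code -val_enum_ord; congr pair; apply: eq_map => i; rewrite perm1.
Qed.

Lemma gcodeX (g : S4C2) (n : nat) : gcode (g ^+ n) = code_exp (gcode g) n.
Proof. by elim: n => [|n IHn]; rewrite ?expg0 ?gcode1 // expgS gcodeM IHn. Qed.

Lemma gcode_eq1 (g : S4C2) : (g == 1) = (gcode g == code1).
Proof. by rewrite -gcode1 (inj_eq gcode_inj). Qed.

Definition all_codes : seq code :=
  [seq (p, b) | p <- permutations (iota 0 4), b <- [:: false; true]].

Lemma gcode_mem (g : S4C2) : gcode g \in all_codes.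
Proof. by rewrite mem_pairs perm_code_mem; case: (odd g.2). Qed.

Definition x0 : S4C2 :=
  (tperm (@Ordinal 4 0 isT) (@Ordinal 4 1 isT) * tperm (@Ordinal 4 1 isT) (@Ordinal 4 2 isT)
     * tperm (@Ordinal 4 2 isT) (@Ordinal 4 3 isT), @Ordinal 2 1 isT).
Definition y0 : S4C2 := (tperm (@Ordinal 4 0 isT) (@Ordinal 4 1 isT), 1).

Definition xcode : code := ([:: 3; 0; 1; 2]%N, true).
Definition ycode : code := ([:: 1; 0; 2; 3]%N, false).

Lemma gcode_x0 : gcode x0 = xcode.
Proof. by rewrite /gcode /perm_code enum_ord4 /= !permM !permE. Qed.
Lemma gcode_y0 : gcode y0 = ycode.
Proof. by rewrite /gcode /perm_code enum_ord4 /= !permE. Qed.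

(* #[u] = 4, #[v] = 2 and #[u * v] = 6, as for (x0, y0); phrased with powers so that it
   can be evaluated on codes and is visibly preserved by automorphisms. *)
Definition gen_relations (u v : S4C2) : bool :=
  [&& u ^+ 4 == 1, u ^+ 2 != 1, v ^+ 2 == 1, v != 1,
      (u * v) ^+ 6 == 1, (u * v) ^+ 2 != 1 & (u * v) ^+ 3 != 1].

Definition code_relations (a b : code) : bool :=
  [&& code_exp a 4 == code1, code_exp a 2 != code1, code_exp b 2 == code1, b != code1,
      code_exp (code_mul a b) 6 == code1, code_exp (code_mul a b) 2 != code1
    & code_exp (code_mul a b) 3 != code1].

Lemma gen_relations_code (u v : S4C2) : gen_relations u v = code_relations (gcode u) (gcode v).
Proof. by rewrite /gen_relations !gcode_eq1 !gcodeX gcodeM. Qed.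

Section AutS4xC2.

Variable a : {perm S4C2}.
Hypothesis aut_a : a \in Aut S4xC2.

Lemma autM (g h : S4C2) : a (g * h) = a g * a h.
Proof. by rewrite -(autmE aut_a) morphM ?inE. Qed.

Lemma aut1 : a 1 = 1.
Proof. by rewrite -(autmE aut_a) morph1. Qed.

Lemma autX (g : S4C2) (n : nat) : a (g ^+ n) = a g ^+ n.
Proof. by rewrite -(autmE aut_a) morphX ?inE. Qed.

Lemma aut_eq1 (g : S4C2) : (a g == 1) = (g == 1).
Proof. by rewrite -(autmE aut_a) (morph_injm_eq1 (injm_autm aut_a)) ?inE. Qed.

Lemma gen_relations_aut (u v : S4C2) : gen_relations (a u) (a v) = gen_relations u v.
Proof. by rewrite /gen_relations -autM -!autX !aut_eq1. Qed.

End AutS4xC2.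

Definition relation_pairs : seq (code * code) :=
  [seq p <- [seq (a, b) | a <- all_codes, b <- all_codes] | code_relations p.1 p.2].

Lemma size_relation_pairs : size relation_pairs = 48. Proof. by vm_compute. Qed.

Lemma gen_relations_x0y0 : gen_relations x0 y0.
Proof. by rewrite gen_relations_code gcode_x0 gcode_y0; vm_compute. Qed.

Definition words (n : nat) : seq code :=
  iter n (fun S => undup (S ++ [seq code_mul c xcode | c <- S] ++ [seq code_mul c ycode | c <- S]))
    [:: code1].

Lemma all_codes_words : {subset all_codes <= words 8}.
Proof. by apply: all_mem_subset; vm_compute. Qed.

Lemma wordsS (n : nat) :
  words n.+1 = undup (words n ++ [seq code_mul c xcode | c <- words n]
                              ++ [seq code_mul c ycode | c <- words n]).
Proof. by []. Qed.

Lemma aut_eq_on_gens (a b : {perm S4C2}) : a \in Aut S4xC2 -> b \in Aut S4xC2 ->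
  a x0 = b x0 -> a y0 = b y0 -> a = b.
Proof.
move=> aut_a aut_b ax ay.
have agree n c : c \in words n -> exists g, gcode g = c /\ a g = b g.
  elim: n c => [|n IHn] c; first by rewrite inE => /eqP->; exists 1; rewrite gcode1 !aut1.
  rewrite wordsS mem_undup !mem_cat => /or3P[/IHn // | /mapP[d /IHn[g [<- abg]] ->] |
                                                     /mapP[d /IHn[g [<- abg]] ->]].
  - by exists (g * x0); rewrite gcodeM gcode_x0 !autM // abg ax.
  - by exists (g * y0); rewrite gcodeM gcode_y0 !autM // abg ay.
apply/permP => g; have [h [/gcode_inj <- //]] := agree 8 _ (all_codes_words (gcode_mem g)).
Qed.

Lemma card_Aut_S4xC2 : #|Aut S4xC2| <= 48.
Proof.
pose gen_images (a : {perm S4C2}) := (gcode (a x0), gcode (a y0)).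
rewrite -size_relation_pairs cardE -(size_map gen_images); apply: uniq_leq_size.
  rewrite (map_inj_in_uniq (f := gen_images)) ?enum_uniq // => a b; rewrite !mem_enum.
  move=> aut_a aut_b /eqP; rewrite xpair_eqE => /andP[/eqP/gcode_inj ax /eqP/gcode_inj ay].
  exact: aut_eq_on_gens.
move=> p /mapP[a]; rewrite mem_enum => aut_a ->; rewrite mem_filter mem_pairs !gcode_mem andbT /=.
by rewrite -gen_relations_code gen_relations_aut // gen_relations_x0y0.
Qed.

Definition sign_Z2 (s : {perm 'I_4}) : 'Z_2 := if odd_perm s then @Ordinal 2 1 isT else 1.

Lemma odd_sign_Z2 (s : {perm 'I_4}) : odd (sign_Z2 s) = odd_perm s.
Proof. by rewrite /sign_Z2; case: odd_perm. Qed.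

Definition twist (g : S4C2) : S4C2 := (g.1, g.2 * sign_Z2 g.1).

Lemma twistK : involutive twist.
Proof.
move=> [s c]; rewrite /twist; congr pair; apply: odd_Z2_inj.
by rewrite !odd_Z2M odd_sign_Z2 -addbA addbb addbF.
Qed.

Lemma twistM (g h : S4C2) : twist (g * h) = twist g * twist h.
Proof.
rewrite /twist; congr pair; apply: odd_Z2_inj; rewrite !odd_Z2M !odd_sign_Z2 odd_permM.
by case: (odd g.2); case: (odd h.2); case: (odd_perm g.1); case: (odd_perm h.1).
Qed.

Lemma Z2_conj (c d : 'Z_2) : c ^ d = c.
Proof. by apply: odd_Z2_inj; rewrite /conjg !odd_Z2M odd_Z2V addbCA addbb addbF. Qed.

Lemma conjg_pair (g w : S4C2) : w ^ g = (w.1 ^ g.1, w.2 ^ g.2).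
Proof. by []. Qed.

Lemma twistJ (g w : S4C2) : twist (w ^ g) = twist w ^ g.
Proof. by rewrite !conjg_pair /twist !Z2_conj /sign_Z2 odd_permJ. Qed.

Definition twist_perm : {perm S4C2} := perm (inv_inj twistK).

Lemma twist_Aut : twist_perm \in Aut S4xC2.
Proof.
rewrite inE; apply/andP; split; first by apply/subsetP => g _; rewrite inE.
by apply/morphicP => g h _ _; rewrite !permE twistM.
Qed.

Lemma twist_conj_aut (g : S4C2) : commute (conj_aut S4xC2 g) twist_perm.
Proof. by apply/permP => w; rewrite !permM !conj_autE ?inE // !permE twistJ. Qed.

Definition twist_pow (b : bool) : {perm S4C2} := if b then twist_perm else 1.

Lemma twist_powD (b c : bool) : twist_pow (b (+) c) = twist_pow b * twist_pow c.
Proof.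
have twist2 : twist_perm * twist_perm = 1.
  by apply/permP => w; rewrite permM perm1 !permE twistK.
by case: b; case: c; rewrite /twist_pow ?twist2 ?mulg1 ?mul1g.
Qed.

Definition psi (g : S4C2) : {perm S4C2} := conj_aut S4xC2 g * twist_pow (odd g.2).

Lemma psiM : {in S4xC2 &, {morph psi : g h / g * h}}.
Proof.
move=> g h _ _; have odd_gh : odd (g * h).2 = odd g.2 (+) odd h.2 by apply: odd_Z2M.
have inN (k : S4C2) : k \in 'N(S4xC2) by rewrite inE; apply: subsetT.
rewrite /psi morphM ?inN // odd_gh twist_powD !mulgA; congr (_ * _).
rewrite -!mulgA; congr (_ * _).
by rewrite /twist_pow; case: (odd g.2); rewrite ?mulg1 ?mul1g //; apply: twist_conj_aut.
Qed.

Canonical psi_morphism := Morphism psiM.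

Lemma psi_Aut (g : S4C2) : psi g \in Aut S4xC2.
Proof.
rewrite groupM ?Aut_aut //.
by rewrite /twist_pow; case: (odd g.2); [apply: twist_Aut | apply: group1].
Qed.

Lemma psi_even (g : S4C2) : ~~ odd g.2 -> psi g = conj_aut S4xC2 g.
Proof. by rewrite /psi => /negPf->; rewrite mulg1. Qed.

Lemma conj_aut_psi (g : S4C2) : conj_aut S4xC2 g = psi (g.1, 1).
Proof.
rewrite psi_even //; apply/permP => w.
by rewrite !conj_autE ?inE // !conjg_pair !Z2_conj.
Qed.

Lemma conjg_snd (g w : S4C2) : (w ^ g).2 = w.2 ^ g.2.
Proof. by []. Qed.

Lemma twist_snd (g : S4C2) : (twist g).2 = g.2 * sign_Z2 g.1.
Proof. by []. Qed.

Lemma psi_eq1 (k : S4C2) : psi k = 1 -> k = 1.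
Proof.
move=> psi_k; have even_k : ~~ odd k.2.
  apply/negP => odd_k.
  have := congr1 (fun p : {perm S4C2} => odd (p (tperm ord0 (@Ordinal 4 1 isT), 1)).2) psi_k.
  rewrite /psi odd_k permM conj_autE ?inE // permE perm1 twistJ conjg_snd Z2_conj twist_snd.
  by rewrite odd_Z2M odd_sign_Z2 odd_tperm.
have k1 : k.1 = 1.
  apply: perm_tperm_conj_id; first by rewrite card_ord.
  move=> i j; have := congr1 (fun p : {perm S4C2} => (p (tperm i j, 1)).1) psi_k.
  by rewrite psi_even // conj_autE ?inE // perm1 conjg_pair /= tpermJ.
case: k even_k k1 {psi_k} => s c /= even_c ->; congr pair.
by apply: odd_Z2_inj; rewrite (negPf even_c).
Qed.

Lemma injm_psi : 'injm psi_morphism.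
Proof.
apply/injmP => g h _ _ gh; apply/eqP; rewrite eq_mulgV1; apply/eqP/psi_eq1.
by rewrite -[psi _]/(psi_morphism _) morphM ?morphV ?inE //= gh mulgV.
Qed.

Lemma im_psi : psi_morphism @* S4xC2 = Aut S4xC2.
Proof.
apply/eqP; rewrite eqEcard (card_injm injm_psi) // card_S4xC2 card_Aut_S4xC2 andbT.
by rewrite morphimEsub //; apply/subsetP => a /imsetP[g _ ->]; apply: psi_Aut.
Qed.

Definition phi2_fun (a : {perm S4C2}) : {perm cubeX} := cube_corr (invm injm_psi a).

Lemma phi2M : {in Aut S4xC2 &, {morph phi2_fun : a b / a * b}}.
Proof.
move=> a b; rewrite -im_psi => psi_a psi_b.
by rewrite /phi2_fun morphM // cube_corrM ?inE.
Qed.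

Definition phi2 : {morphism Aut S4xC2 >-> {perm elt Gamma_cube}} := Morphism phi2M.

Lemma phi2_psi (g : S4C2) : phi2 (psi g) = cube_corr g.
Proof. by rewrite /= /phi2_fun invmE ?inE. Qed.

Lemma morphim_phi2 (H : {set S4C2}) : phi2 @* (psi_morphism @* H) = cube_corr @: H.
Proof.
have psiH : psi_morphism @* H \subset Aut S4xC2 by rewrite -im_psi morphimS ?subsetT.
rewrite (morphimEsub phi2 psiH) (morphimEsub psi_morphism (subsetT H)) -imset_comp.
by apply: eq_imset => g; apply: phi2_psi.
Qed.

Lemma Aut_psi (a : {perm S4C2}) : a \in Aut S4xC2 -> exists g, a = psi g.
Proof. by rewrite -im_psi => /morphimP[g _ _ ->]; exists g. Qed.

Lemma injm_phi2 : 'injm phi2.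
Proof.
apply/injmP => a b /Aut_psi[g ->] /Aut_psi[h ->].
by rewrite !phi2_psi => /cube_corr_inj-> //; rewrite inE.
Qed.

Lemma isom_phi2 : isom (Aut S4xC2) (correlations Gamma_cube) phi2.
Proof.
have im_phi2 : phi2 @* Aut S4xC2 = correlations Gamma_cube.
  by have := morphim_phi2 S4xC2; rewrite im_psi im_cube_corr.
by rewrite -im_phi2; apply/isomP; split; [apply: injm_phi2 |].
Qed.

Lemma Inn_S4xC2 : Inn S4xC2 = psi_morphism @* [set g : S4C2 | ~~ odd g.2].
Proof.
rewrite /Inn !morphimEsub ?subsetT //; apply/setP => a; apply/imsetP/imsetP => [[g _ ->] | [g]].
  by exists (g.1, 1); [rewrite inE | apply: conj_aut_psi].
by rewrite inE => even_g ->; exists g; [rewrite inE | apply: psi_even].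
Qed.

Lemma phi2_Inn : phi2 @* Inn S4xC2 = type_pres_correlations Gamma_cube.
Proof.
rewrite Inn_S4xC2 morphim_phi2; apply/setP => b; apply/imsetP/idP => [[g] | tp_b].
  by rewrite inE => even_g ->; rewrite cube_corr_type_pres.
have : b \in correlations Gamma_cube by move: tp_b; rewrite inE => /andP[].
rewrite -im_cube_corr => /imsetP[g _ def_b]; exists g => //.
by rewrite inE -cube_corr_type_pres -def_b.
Qed.

Theorem mainTheorem3 : incidence_geometric_representation Gamma_cube S4xC2.
Proof.
split; first exact: cube_incidence_system.
by exists phi2; split; [apply: isom_phi2 | apply: phi2_Inn].
Qed.
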